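(* Let $p$ be a prime. If $P$ is a non-cyclic finite $p$-group of exponent $p$, then there exists a finite solvable group $G$ whose Sylow $p$-subgroups are isomorphic to $P$ such that $G$ has a redundant Sylow $p$-subgroup.
   Context: For a finite group $G$ and a prime $p$, $G_p$ denotes the set of $p$-elements of $G$ and $\mathrm{Syl}_p(G)$ the set of Sylow $p$-subgroups of $G$. $G$ is said to have a redundant Sylow $p$-subgroup if $G_p$ is contained in the union of the members of some proper subset of $\mathrm{Syl}_p(G)$. *)

From mathcomp Require Import all_boot all_fingroup all_solvable.
Set Implicit Arguments. Unset Strict Implicit. Unset Printing Implicit Defensive.
Local Open Scope group_scope.

Definition p_elts (gT : finGroupType) (p : nat) (G : {set gT}) : {set gT} :=
  [set x in G | p.-elt x].

Definition has_redundant_Sylow (gT : finGroupType) (p : nat) (G : {set gT}) : Prop :=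
  exists2 S : {set {group gT}}, S \proper 'Syl_p(G) &
    p_elts p G \subset \bigcup_(Q in S) Q.

From mathcomp Require Import all_boot all_fingroup all_solvable ssralg zmodp.
Set Implicit Arguments. Unset Strict Implicit. Unset Printing Implicit Defensive.
Local Open Scope group_scope.
Import GRing.Theory.

(* Take a prime q <> p and realise G = Z_q wr P as the group of permutations
   of gT * Z_q generated by the shifts (y, i) |-> (y, i + f y) and the right
   translations (y, i) |-> (y * x, i), x in P.  The shifts form an abelian
   normal q-subgroup V, so the translation copy H of P is a Sylow p-subgroup
   and G is solvable.  For h = transl a in H, the shift w by the indicator of
   <[a]> commutes with h.  As P is not cyclic, some b in P lies outside <[a]>,
   and w does not commute with transl b; since H meets V trivially, an element
   of V normalising H would centralise it.  So w does not normalise H, and h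
   lies in the Sylow subgroup H :^ w <> H: every p-element of G lies in a Sylow
   subgroup other than H. *)

Lemma has_redundant_SylowP (gT : finGroupType) p (G H : {group gT}) :
    H \in 'Syl_p(G) ->
    (forall h, h \in H -> exists2 w, w \in 'C_G[h] & w \notin 'N(H)) ->
  has_redundant_Sylow p G.
Proof.
move=> sylH hcent; exists ('Syl_p(G) :\ H); first exact: properD1.
apply/subsetP => x; rewrite inE => /andP[Gx px].
have [Hx | notHx] := boolP (x \in H).
  have [w /setIP[Gw /cent1P cxw] nHw] := hcent x Hx.
  have xJw : x ^ w = x by rewrite /conjg -cxw mulKg.
  apply/bigcupP; exists (H :^ w)%G; last by rewrite -xJw memJ_conjg.
  rewrite !inE pHallJ //; move: sylH; rewrite inE => -> /[!andbT].
  apply: contraNneq nHw => /(congr1 val) /= eHw; by rewrite inE eHw.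
have [|Q sylQ sxQ] := Sylow_superset (_ : <[x]> \subset G) px.
  by rewrite cycle_subG.
apply/bigcupP; exists Q; last by rewrite -cycle_subG.
rewrite !inE sylQ andbT; apply: contraNneq notHx => <-; by rewrite -cycle_subG.
Qed.

Lemma TI_norm_cent1 (gT : finGroupType) (H V : {group gT}) w :
  H \subset 'N(V) -> H :&: V = 1 -> w \in V -> w \in 'N(H) -> H \subset 'C[w].
Proof.
move=> nVH tiHV Vw nHw; rewrite -cent_cycle; apply/commG1P; apply/trivgP.
rewrite -tiHV; apply: commg_subI; first by rewrite subsetI subxx.
by rewrite cycle_subG inE Vw.
Qed.

Section ShiftTranslation.

Variables (gT : finGroupType) (q : nat).
Local Notation T := (gT * 'Z_q)%type.

Definition transl_fun x (z : T) : T := (z.1 * x, z.2).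

Lemma transl_fun_inj x : injective (transl_fun x).
Proof. by move=> [a i] [b j] [/mulIg -> ->]. Qed.

Definition transl x : {perm T} := perm (@transl_fun_inj x).

Lemma translE x z : transl x z = (z.1 * x, z.2).
Proof. by rewrite permE. Qed.

Lemma transl_morphM : {in setT &, {morph transl : x y / x * y}}.
Proof. by move=> x y _ _; apply/permP => z; rewrite permM !translE mulgA. Qed.

Canonical transl_morphism := Morphism transl_morphM.

Lemma injm_transl : 'injm transl_morphism.
Proof.
apply/injmP => x y _ _ /permP/(_ (1, 0%R)).
by rewrite /= !translE !mul1g => -[].
Qed.

Definition shift_fun (f : {ffun gT -> 'Z_q}) (z : T) : T :=
  (z.1, z.2 + f z.1)%R.

Lemma shift_fun_inj f : injective (shift_fun f).
Proof. by move=> [a i] [b j] /pair_equal_spec[/= <- /addIr ->]. Qed.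

Definition shift f : {perm T} := perm (@shift_fun_inj f).

Lemma shiftE f z : shift f z = (z.1, z.2 + f z.1)%R.
Proof. by rewrite permE. Qed.

Lemma shift_inj : injective shift.
Proof.
move=> f g /permP eq_fg; apply/ffunP => y.
by have := eq_fg (y, 0%R); rewrite !shiftE /= !add0r => -[].
Qed.

Lemma shift0 : shift 0%R = 1.
Proof. by apply/permP => -[y i]; rewrite shiftE perm1 ffunE addr0. Qed.

Lemma shiftD f g : shift f * shift g = shift (f + g)%R.
Proof. by apply/permP => z; rewrite permM !shiftE ffunE addrA. Qed.

Definition shifts := [set shift f | f : {ffun gT -> 'Z_q}].

Lemma group_set_shifts : group_set shifts.
Proof.
apply/group_setP; split; first by rewrite -shift0 imset_f.
by move=> _ _ /imsetP[f _ ->] /imsetP[g _ ->]; rewrite shiftD imset_f.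
Qed.

Canonical shifts_group := Group group_set_shifts.

Lemma card_shifts : 1 < q -> #|shifts| = (q ^ #|gT|)%N.
Proof.
move=> q_gt1; rewrite card_imset ?card_ffun ?card_ord ?Zp_cast //.
exact: shift_inj.
Qed.

Lemma abelian_shifts : abelian shifts.
Proof.
apply/centsP => _ /imsetP[f _ ->] _ /imsetP[g _ ->].
by rewrite /commute !shiftD addrC.
Qed.

Lemma shiftJ f x : shift f ^ transl x = shift [ffun y => f (y * x^-1)].
Proof.
rewrite /conjg -(morphV transl_morphism) ?inE //=.
apply/permP => z; rewrite !permM !translE !shiftE /= ffunE mulgKV.
by case: z.
Qed.

Lemma morphim_transl_norm (A : {set gT}) :
  transl_morphism @* A \subset 'N(shifts).
Proof.
apply/subsetP => _ /morphimP[x _ _ ->]; rewrite inE sub_conjg.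
apply/subsetP => _ /imsetP[f _ ->].
by rewrite mem_conjg invgK shiftJ imset_f.
Qed.

Lemma morphim_transl_TI (A : {group gT}) :
  transl_morphism @* A :&: shifts = 1.
Proof.
apply/trivgP/subsetP => _ /setIP[/morphimP[x _ _ ->] /imsetP[f _ /permP]].
move=> /(_ (1, 0%R)); rewrite translE shiftE /= mul1g => -[-> _].
by rewrite morph1 inE.
Qed.

Lemma commute_shift_transl f x :
  commute (shift f) (transl x) <-> (forall y, f (y * x) = f y).
Proof.
split=> [/permP cfx y | fxf].
  have := cfx (y, 0%R); rewrite !permM !translE !shiftE /=.
  by rewrite !add0r => -[].
by apply/permP => z; rewrite !permM !translE !shiftE /= fxf.
Qed.

Definition wreath (P : {group gT}) := (shifts_group <*> transl_morphism @* P)%G.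

Lemma solvable_wreath (P : {group gT}) : solvable P -> solvable (wreath P).
Proof.
move=> solP; have nVH := morphim_transl_norm P.
rewrite (series_sol (H := shifts)) ?normalYl // abelian_sol ?abelian_shifts //=.
by rewrite norm_joinEr // quotientMidl quotient_sol ?morphim_sol.
Qed.

Variable p : nat.
Hypotheses (pr_q : prime q) (neq_qp : q != p).

Lemma transl_Sylow (P : {group gT}) :
  p.-group P -> (transl_morphism @* P)%G \in 'Syl_p(wreath P).
Proof.
move=> pP; rewrite inE /pHall joing_subr morphim_pgroup //=.
rewrite -divgS ?joing_subr //= norm_joinEr ?morphim_transl_norm //.
rewrite TI_cardMg; last by rewrite setIC morphim_transl_TI.
rewrite mulnK // card_shifts ?prime_gt1 //.
by rewrite pnatX pnatE // !inE neq_qp.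
Qed.

Lemma Sylow_wreath_isog (P : {group gT}) (S : {group {perm T}}) :
  p.-group P -> S \in 'Syl_p(wreath P) -> S \isog P.
Proof.
move=> pP; have := transl_Sylow pP; rewrite !inE => sylH sylS.
have [x _ ->] := Sylow_trans sylH sylS.
rewrite isog_sym; apply: isog_trans (sub_isog (subsetT P) injm_transl) _.
exact: conj_isog.
Qed.

Definition cycle_indicator a : {ffun gT -> 'Z_q} :=
  [ffun y => (y \in <[a]>)%:R]%R.

Lemma redundant_Sylow_wreath (P : {group gT}) :
  p.-group P -> ~~ cyclic P -> has_redundant_Sylow p (wreath P).
Proof.
move=> pP ncP; apply: has_redundant_SylowP (transl_Sylow pP) _.
move=> _ /morphimP[a _ Pa ->].
have [b Pb notab] : exists2 b, b \in P & b \notin <[a]>.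
  apply/subsetPn; apply: contra ncP => sPa; apply/cyclicP; exists a.
  by apply/eqP; rewrite eqEsubset sPa cycle_subG.
set w := shift (cycle_indicator a); have Vw : w \in shifts by apply: imset_f.
exists w.
  rewrite inE (subsetP (joing_subl _ _)) //=.
  by apply/cent1P/commute_shift_transl => y; rewrite !ffunE groupMr ?cycle_id.
apply: contra notab => nHw.
have /subsetP cHw :=
  TI_norm_cent1 (morphim_transl_norm P) (morphim_transl_TI P) Vw nHw.
have Hb := mem_morphim transl_morphism (in_setT b) Pb.
have /cent1P/commute_sym/commute_shift_transl/(_ 1) := cHw _ Hb.
rewrite !ffunE mul1g group1.
by case: (b \in <[a]>) => // /eqP; rewrite eq_sym oner_eq0.
Qed.

End ShiftTranslation.

Theorem theoremA (p : nat) (pT : finGroupType) (P : {group pT}) :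
  prime p -> p.-group P -> ~~ cyclic P -> exponent P = p ->
  exists (gT : finGroupType) (G : {group gT}),
    [/\ solvable G,
        (forall S : {group gT}, S \in 'Syl_p(G) -> S \isog P)
      & has_redundant_Sylow p G].
Proof.
move=> pr_p pP ncP _.
pose q := if p == 2 then 3 else 2.
have pr_q : prime q by rewrite /q; case: ifP.
have neq_qp : q != p.
  by rewrite /q; case: ifP => [/eqP -> // | /negbT]; rewrite eq_sym.
exists _, (wreath q P); split.
- exact: solvable_wreath (pgroup_sol pP).
- by move=> S; apply: (Sylow_wreath_isog pr_q neq_qp).
- exact: (redundant_Sylow_wreath pr_q neq_qp).
Qed.
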